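(* Let $\mathcal{F}^*$ be one of $\mathcal{F}^c,\mathcal{F}^{ev},\mathcal{F}^o$, let $\kappa_0=\kappa(H_0,\lambda_0,\alpha_0)$ and $\kappa_1=\kappa(H_1,\lambda_1,\alpha_1)$ be nondegenerate quadratic functions in $\mathcal{F}^*$, and let $\theta:\mathrm{Cok}(\hat\lambda_0)\to\mathrm{Cok}(\hat\lambda_1)$ be an isometry of the induced quadratic linking families. Let $H=\{(x_0,x_1)\in H_0^*\oplus H_1^*:\theta([x_0])=[x_1]\}$ and define $\lambda:H\times H\to\mathbb{Q}$ by $\lambda((x_0,x_1),(y_0,y_1))=\lambda_0^{-1}(x_0,y_0)-\lambda_1^{-1}(x_1,y_1)$. Then: 1. $\lambda$ is a nonsingular integral symmetric bilinear form on the free abelian group $H$; 2. the map $H_0\oplus H_1\to H$, $(v_0,v_1)\mapsto(\hat\lambda_0(v_0),-\hat\lambda_1(v_1))$, is an isometric embedding of $\lambda_0\oplus(-\lambda_1)$ into $\lambda$; 3. $(\alpha_0,\alpha_1)\in H$; 4. with $\alpha:=\hat\lambda((\alpha_0,\alpha_1))$, the quadratic function $\kappa_0\cup_\theta\kappa_1^-:=\kappa(H,\lambda,\alpha)$ belongs to $\mathcal{F}^*$; 5. the map in 2 is an isometric embedding $\kappa_0\oplus\kappa_1^-\to\kappa_0\cup_\theta\kappa_1^-$.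
   Context: A quadratic function $\kappa(H,\lambda,\alpha)$: $H$ finitely generated free abelian, $\lambda$ symmetric bilinear into $\mathbb{Z}$, $\alpha\in H^*=\mathrm{Hom}(H,\mathbb{Z})$, $\kappa(v)=\lambda(v,v)+\alpha(v)$, adjoint $\hat\lambda:H\to H^*$; nondegenerate if $\hat\lambda$ injective, nonsingular if bijective; $\kappa^-=\kappa(H,-\lambda,\alpha)$. Families: $\mathcal{F}^c$ characteristic ($\lambda(v,v)+\alpha(v)$ even $\forall v$); $\mathcal{F}^{ev}$ with $\lambda$ even; $\mathcal{F}^o$ with $\lambda$ even and $\alpha=0$. For nondegenerate $\kappa_i$: $[x]$ denotes the class of $x\in H_i^*$ in the finite group $\mathrm{Cok}\,\hat\lambda_i$; $\lambda_i^{-1}(x,y)=y(v)/r$ where $rx=\hat\lambda_i(v)$, $r\ne0$; $q^{ev}(\kappa_i)([x])=\frac12\lambda_i^{-1}(x,x)\bmod\mathbb{Z}$ (used for $\mathcal{F}^{ev},\mathcal{F}^o$) and $q^c(\kappa_i)([x])=\frac12(\lambda_i^{-1}(x,x)+\lambda_i^{-1}(x,\alpha_i))\bmod\mathbb{Z}$ (for $\mathcal{F}^c$). An isometry of the induced quadratic linking families is a group isomorphism $\theta$ with $\theta([\alpha_0])=[\alpha_1]$ and $q^*(\kappa_1)\circ\theta=q^*(\kappa_0)$. Isometric embedding: injective homomorphism preserving the (quadratic or bilinear) forms. *)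

From HB Require Import structures.
From mathcomp Require Import all_boot all_order all_algebra.
Set Implicit Arguments. Unset Strict Implicit. Unset Printing Implicit Defensive.
Import Order.TTheory GRing.Theory Num.Theory.
Local Open Scope ring_scope.

(* A f.g. free abelian group H is Z^n ('rV[int]_n);
   H^* = Hom(H,Z) is identified with 'rV[int]_n via the dual basis,
   x(v) = (v *m x^T) 0 0.  lambda is given by its Gram matrix L,
   lambda(v,w) = (v *m L *m w^T) 0 0, adjoint  v |-> v *m L. *)

Inductive qfamily := Fc | Fev | Fo.

Definition bil n (L : 'M[int]_n) (v w : 'rV[int]_n) : int := (v *m L *m w^T) 0 0.
Definition app n (a : 'rV[int]_n) (v : 'rV[int]_n) : int := (v *m a^T) 0 0.

Definition nondeg n (L : 'M[int]_n) : Prop := forall v : 'rV[int]_n, v *m L = 0 -> v = 0.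

Definition in_family (F : qfamily) n (L : 'M[int]_n) (a : 'rV[int]_n) : Prop :=
  match F with
  | Fc => forall v, (2 %| bil L v v + app a v)%Z
  | Fev => forall v, (2 %| bil L v v)%Z
  | Fo => (forall v, (2 %| bil L v v)%Z) /\ a = 0
  end.

Definition cok_eq n (L : 'M[int]_n) (x y : 'rV[int]_n) : Prop :=
  exists v : 'rV[int]_n, x - y = v *m L.

Definition ratmx m n (A : 'M[int]_(m, n)) : 'M[rat]_(m, n) := map_mx (fun z : int => z%:~R) A.

(* lambda^{-1}(x, y) = y(v)/r where r x = adjoint(v); computed as x L^{-1} y^T *)
Definition linv n (L : 'M[int]_n) (x y : 'rV[int]_n) : rat :=
  (ratmx x *m invmx (ratmx L) *m (ratmx y)^T) 0 0.

Definition eqmodZ (p q : rat) : Prop := exists z : int, p - q = z%:~R.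

(* value in Q (to be read mod Z) of the quadratic linking qfamily q^* *)
Definition qlink (F : qfamily) n (L : 'M[int]_n) (a : 'rV[int]_n) (x : 'rV[int]_n) : rat :=
  match F with
  | Fc => (linv L x x + linv L x a) / 2
  | _ => linv L x x / 2
  end.

(* theta : Cok L0 -> Cok L1, given on representatives: a well-defined map of classes
   which is a group isomorphism of the cokernels, sends [a0] to [a1] and satisfies
   q^*(kappa1) o theta = q^*(kappa0). *)
Definition qlf_isometry (F : qfamily) n0 n1 (L0 : 'M[int]_n0) (a0 : 'rV[int]_n0)
    (L1 : 'M[int]_n1) (a1 : 'rV[int]_n1) (theta : 'rV[int]_n0 -> 'rV[int]_n1) : Prop :=
  [/\ (forall x x', cok_eq L0 x x' -> cok_eq L1 (theta x) (theta x')),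
      (forall x y, cok_eq L1 (theta (x + y)) (theta x + theta y)),
      (forall x y, cok_eq L1 (theta x) (theta y) -> cok_eq L0 x y),
      (forall y, exists x, cok_eq L1 (theta x) y) &
      (cok_eq L1 (theta a0) a1 /\
       forall x, eqmodZ (qlink F L1 a1 (theta x)) (qlink F L0 a0 x))].

Definition pairT n0 n1 := ('rV[int]_n0 * 'rV[int]_n1)%type.
Definition padd n0 n1 (h k : pairT n0 n1) : pairT n0 n1 := (h.1 + k.1, h.2 + k.2).

Definition inH n0 n1 (L1 : 'M[int]_n1) (theta : 'rV[int]_n0 -> 'rV[int]_n1)
  (h : pairT n0 n1) : Prop := cok_eq L1 (theta h.1) h.2.

Definition lamH n0 n1 (L0 : 'M[int]_n0) (L1 : 'M[int]_n1) (h k : pairT n0 n1) : rat :=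
  linv L0 h.1 k.1 - linv L1 h.2 k.2.

Definition free_fg n0 n1 (H : pairT n0 n1 -> Prop) : Prop :=
  exists m (B0 : 'M[int]_(m, n0)) (B1 : 'M[int]_(m, n1)),
    forall h, H h <-> exists! u : 'rV[int]_m, h = (u *m B0, u *m B1).

Definition symmetric_on n0 n1 (H : pairT n0 n1 -> Prop) (lam : pairT n0 n1 -> pairT n0 n1 -> rat) :=
  forall h k, H h -> H k -> lam h k = lam k h.

Definition bilinear_on n0 n1 (H : pairT n0 n1 -> Prop) (lam : pairT n0 n1 -> pairT n0 n1 -> rat) :=
  forall h h' k, H h -> H h' -> H k ->
    lam (padd h h') k = lam h k + lam h' k /\ lam k (padd h h') = lam k h + lam k h'.

Definition integral_on n0 n1 (H : pairT n0 n1 -> Prop) (lam : pairT n0 n1 -> pairT n0 n1 -> rat) :=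
  forall h k, H h -> H k -> exists z : int, lam h k = z%:~R.

(* the adjoint H -> Hom(H, Z), h |-> lam(h, .), is bijective *)
Definition nonsingular_on n0 n1 (H : pairT n0 n1 -> Prop) (lam : pairT n0 n1 -> pairT n0 n1 -> rat) :=
  (forall h, H h -> (forall k, H k -> lam h k = 0) -> h = (0, 0)) /\
  (forall f : pairT n0 n1 -> int,
     (forall h k, H h -> H k -> f (padd h k) = f h + f k) ->
     exists h, H h /\ forall k, H k -> (f k)%:~R = lam h k).

Definition evenQ (x : rat) : Prop := exists z : int, x = (2 * z)%:~R.

(* kappa(H, lam, alpha) with alpha = adjoint(a) lies in the qfamily F *)
Definition fam_on (F : qfamily) n0 n1 (H : pairT n0 n1 -> Prop)
    (lam : pairT n0 n1 -> pairT n0 n1 -> rat) (a : pairT n0 n1) : Prop :=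
  match F with
  | Fc => forall h, H h -> evenQ (lam h h + lam a h)
  | Fev => forall h, H h -> evenQ (lam h h)
  | Fo => (forall h, H h -> evenQ (lam h h)) /\ (forall h, H h -> lam a h = 0)
  end.

Definition jmap n0 n1 (L0 : 'M[int]_n0) (L1 : 'M[int]_n1) (v : pairT n0 n1) : pairT n0 n1 :=
  (v.1 *m L0, - (v.2 *m L1)).

(* Everything is computed over Q with the inverse Gram matrices.  On a class
   [x] the linking value q(x) is well defined mod Z, and lambda^{-1}(x, y) is
   its polarization; since theta preserves q and is additive on classes,
   lambda = lambda0^{-1} - lambda1^{-1} is integral on H.  Additivity also
   makes theta induced by a matrix Theta modulo L1, which exhibits an explicit
   basis of H.  For nonsingularity, a homomorphism f : H -> Z is first
   represented on the finite-index sublattice j(H0 (+) H1), where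
   lambda(h, j v) = h(v), hence on all of H; the representing element lies in
   H because, theta being onto, anything pairing integrally with H lies in H. *)

From HB Require Import structures.
From mathcomp Require Import all_boot all_order all_algebra.
From mathcomp Require Import ring.
Set Implicit Arguments. Unset Strict Implicit. Unset Printing Implicit Defensive.
Import Order.TTheory GRing.Theory Num.Theory.
Local Open Scope ring_scope.

Lemma ratmxE m n (A : 'M[int]_(m, n)) i j : ratmx A i j = (A i j)%:~R.
Proof. exact: mxE. Qed.

Lemma ratmx0 m n : ratmx (0 : 'M[int]_(m, n)) = 0.
Proof. exact: map_mx0. Qed.

Lemma ratmxD m n (A B : 'M[int]_(m, n)) : ratmx (A + B) = ratmx A + ratmx B.
Proof. exact: map_mxD. Qed.

Lemma ratmxN m n (A : 'M[int]_(m, n)) : ratmx (- A) = - ratmx A.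
Proof. exact: map_mxN. Qed.

Lemma ratmxM m n p (A : 'M[int]_(m, n)) (B : 'M_(n, p)) :
  ratmx (A *m B) = ratmx A *m ratmx B.
Proof. exact: map_mxM. Qed.

Lemma ratmxT m n (A : 'M[int]_(m, n)) : ratmx A^T = (ratmx A)^T.
Proof. by rewrite /ratmx map_trmx. Qed.

Lemma ratmx_inj m n : injective (@ratmx m n).
Proof.
by move=> A B eqAB; apply/matrixP=> i j; apply: (@intr_inj rat); rewrite -!ratmxE eqAB.
Qed.

Lemma unitmx_ratmx n (L : 'M[int]_n) : (ratmx L \in unitmx) = (\det L != 0).
Proof. by rewrite unitmxE unitfE det_map_mx intr_eq0. Qed.

(* A rational kernel vector of [ratmx L] becomes an integral one after
   clearing denominators. *)
Lemma nondeg_unitmx n (L : 'M[int]_n) : nondeg L -> ratmx L \in unitmx.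
Proof.
move=> ndL; rewrite unitmxE unitfE; apply/negP => /det0P [v v_neq0 vL0].
pose d : int := \prod_i denq (v 0 i).
pose w : 'rV[int]_n := \row_i (numq (v 0 i) * \prod_(j | j != i) denq (v 0 j)).
have d_neq0 : d != 0 by apply/prodf_neq0 => i _; apply: denq_neq0.
have ratw : ratmx w = d%:~R *: v.
  apply/matrixP => i j; rewrite ratmxE !mxE (ord1 i) /d [in RHS](bigD1 j) //= !intrM.
  rewrite -[X in _ = _ * X](divq_num_den (v 0 j)).
  by field; rewrite intr_eq0 denq_neq0.
have wL0 : w *m L = 0 by apply: ratmx_inj; rewrite ratmxM ratw -scalemxAl vL0 scaler0 ratmx0.
move: ratw; rewrite (ndL _ wL0) ratmx0 => /esym/eqP; rewrite scaler_eq0.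
by rewrite intr_eq0 (negbTE d_neq0) (negbTE v_neq0).
Qed.

Lemma scale_det_mulmx n (L : 'M[int]_n) (x : 'rV[int]_n) :
  \det L *: x = x *m \adj L *m L.
Proof. by rewrite -mulmxA mul_adj_mx mul_mx_scalar. Qed.

Lemma app_delta n (a : 'rV[int]_n) i : app a (delta_mx 0 i) = a 0 i.
Proof. by rewrite /app -rowE !mxE. Qed.

Lemma additive_app n (g : 'rV[int]_n -> int) :
  (forall x y, g (x + y) = g x + g y) -> forall v, g v = app (\row_i g 'e_i) v.
Proof.
move=> gD.
have g0 : g 0 = 0 by apply: (addrI (g 0)); rewrite -gD !addr0.
have gN x : g (- x) = - g x by apply/eqP; rewrite -addr_eq0 -gD addNr g0.
have gMn x k : g (x *+ k) = g x *+ k.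
  by elim: k => [|k IH]; rewrite ?mulr0n // !mulrS gD IH.
have gZ (z : int) x : g (z *: x) = z * g x.
  case: z => k; first by rewrite -natz scaler_nat gMn mulr_natl.
  by rewrite NegzE scaleNr gN -natz scaler_nat gMn mulNr mulr_natl.
move=> v; rewrite {1}(row_sum_delta v) (big_morph g gD g0) /app mxE.
by apply: eq_bigr => j _; rewrite gZ !mxE.
Qed.

Section Cokernel.
Variables (n : nat) (L : 'M[int]_n).

Lemma cok_eq_refl x : cok_eq L x x.
Proof. by exists 0; rewrite subrr mul0mx. Qed.

Lemma cok_eq_sym x y : cok_eq L x y -> cok_eq L y x.
Proof. by move=> [v xy]; exists (- v); rewrite mulNmx -xy opprB. Qed.

Lemma cok_eq_trans x y z : cok_eq L x y -> cok_eq L y z -> cok_eq L x z.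
Proof. by move=> [v xy] [w yz]; exists (v + w); rewrite mulmxDl -xy -yz addrA subrK. Qed.

Lemma cok_eqD x x' y y' : cok_eq L x x' -> cok_eq L y y' -> cok_eq L (x + y) (x' + y').
Proof. by move=> [v xx'] [w yy']; exists (v + w); rewrite mulmxDl -xx' -yy' opprD addrACA. Qed.

Lemma cok_eqN x y : cok_eq L x y -> cok_eq L (- x) (- y).
Proof. by move=> [v xy]; exists (- v); rewrite mulNmx -xy opprD. Qed.

Lemma cok_eq_mulmx v : cok_eq L (v *m L) 0.
Proof. by exists v; rewrite subr0. Qed.

Variables (m : nat) (f : 'rV[int]_m -> 'rV[int]_n).
Hypothesis fD : forall x y, cok_eq L (f (x + y)) (f x + f y).

Lemma cok_additive0 : cok_eq L (f 0) 0.
Proof.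
have := cok_eqD (fD 0 0) (cok_eq_refl (- f 0)).
by rewrite addr0 subrr addrK; apply: cok_eq_sym.
Qed.

Lemma cok_additiveN x : cok_eq L (f (- x)) (- f x).
Proof.
have fxN0 : cok_eq L (f x + f (- x)) 0.
  by apply: cok_eq_trans (cok_eq_sym (fD _ _)) _; rewrite subrr; apply: cok_additive0.
by have := cok_eqD fxN0 (cok_eq_refl (- f x)); rewrite addrAC subrr add0r sub0r.
Qed.

Lemma cok_additiveMn x k : cok_eq L (f (x *+ k)) (f x *+ k).
Proof.
elim: k => [|k IH]; first by rewrite !mulr0n; apply: cok_additive0.
by rewrite !mulrS; apply: cok_eq_trans (fD _ _) (cok_eqD (cok_eq_refl _) IH).
Qed.

Lemma cok_additiveZ (z : int) x : cok_eq L (f (z *: x)) (z *: f x).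
Proof.
case: z => k; first by rewrite -natz !scaler_nat; apply: cok_additiveMn.
rewrite NegzE !scaleNr -natz !scaler_nat.
exact: cok_eq_trans (cok_additiveN _) (cok_eqN (cok_additiveMn _ _)).
Qed.

Lemma cok_additive_mulmx x : cok_eq L (f x) (x *m \matrix_i f 'e_i).
Proof.
rewrite {1}(row_sum_delta x) mulmx_sum_row.
apply: (big_ind2 (fun u w => cok_eq L (f u) w)) => [|u u' w w' fu fw|i _].
- exact: cok_additive0.
- exact: cok_eq_trans (fD _ _) (cok_eqD fu fw).
- by rewrite rowK; apply: cok_additiveZ.
Qed.

End Cokernel.

Section InverseForm.
Variables (n : nat) (L : 'M[int]_n).
Hypotheses (L_sym : L^T = L) (L_unit : ratmx L \in unitmx).

Lemma linvC x y : linv L x y = linv L y x.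
Proof.
rewrite /linv; transitivity ((ratmx x *m invmx (ratmx L) *m (ratmx y)^T)^T 0 0).
  by rewrite [RHS]mxE.
by rewrite !trmx_mul trmxK trmx_inv -[(ratmx L)^T]ratmxT L_sym mulmxA.
Qed.

Lemma linvDl x x' y : linv L (x + x') y = linv L x y + linv L x' y.
Proof. by rewrite /linv ratmxD !mulmxDl mxE. Qed.

Lemma linvNl x y : linv L (- x) y = - linv L x y.
Proof. by rewrite /linv ratmxN !mulNmx mxE. Qed.

Lemma linv0l y : linv L 0 y = 0.
Proof. by rewrite /linv ratmx0 !mul0mx mxE. Qed.

Lemma linvDr x y y' : linv L x (y + y') = linv L x y + linv L x y'.
Proof. by rewrite !(linvC x) linvDl. Qed.

Lemma linvNr x y : linv L x (- y) = - linv L x y.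
Proof. by rewrite !(linvC x) linvNl. Qed.

Lemma linvMnr x y k : linv L x (y *+ k) = linv L x y *+ k.
Proof.
elim: k => [|k IH]; first by rewrite !mulr0n linvC linv0l.
by rewrite !mulrS linvDr IH.
Qed.

Lemma linv_mull v y : linv L (v *m L) y = (app y v)%:~R.
Proof. by rewrite /linv ratmxM mulmxK // -ratmxT -ratmxM ratmxE. Qed.

Lemma linv_mulr x v : linv L x (v *m L) = (app x v)%:~R.
Proof. by rewrite linvC linv_mull. Qed.

Lemma linv_mul2 v w : linv L (v *m L) (w *m L) = (bil L v w)%:~R.
Proof. by rewrite linv_mull /app /bil trmx_mul L_sym mulmxA. Qed.

Lemma linv_cok_eql x x' y : cok_eq L x x' -> linv L x y - linv L x' y \is a Num.int.
Proof. by move=> [v xx']; rewrite -linvNl -linvDl xx' linv_mull intr_int. Qed.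

Lemma linv_cok_eqr x y y' : cok_eq L y y' -> linv L x y - linv L x y' \is a Num.int.
Proof. by rewrite !(linvC x); apply: linv_cok_eql. Qed.

Lemma linv_polar F a x y :
  linv L x y = qlink F L a (x + y) - qlink F L a x - qlink F L a y.
Proof. by case: F; rewrite /qlink !linvDl !linvDr (linvC y x); field. Qed.

Lemma half_int_in_family F a v : in_family F L a ->
  (linv L (v *m L) (v *m L) + (if F is Fc then linv L (v *m L) a else 0)) / 2
  \is a Num.int.
Proof.
rewrite linv_mul2 linv_mull.
case: F => [famF|famF|[famF _]]; rewrite ?addr0 -?intrD;
  by have /dvdzP [k ->] := famF v; rewrite intrM mulfK ?intr_int.
Qed.

(* Moving [x] by [v L] changes [qlink] by the integer [x(v)] plus half the
   value at [v] of the quadratic function, which is even. *)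
Lemma qlink_cok_eq F a x x' : in_family F L a -> cok_eq L x x' ->
  qlink F L a x - qlink F L a x' \is a Num.int.
Proof.
move=> famF [v xx']; have -> : x = x' + v *m L by rewrite -xx' addrC subrK.
have -> : qlink F L a (x' + v *m L) - qlink F L a x' = (app x' v)%:~R +
    (linv L (v *m L) (v *m L) + (if F is Fc then linv L (v *m L) a else 0)) / 2.
  by case: F {famF}; rewrite /qlink ?addr0 !linvDl !linvDr (linvC (v *m L) x') linv_mulr; field.
by rewrite rpredD ?intr_int ?half_int_in_family.
Qed.

Lemma im_of_linv_int w : (forall z, linv L w z \is a Num.int) -> exists u, w = u *m L.
Proof.
move=> w_int; pose M := ratmx w *m invmx (ratmx L).
have M_int i : M 0 i \is a Num.int.
  have := w_int (delta_mx 0 i); rewrite /linv -ratmxT trmx_delta /ratmx map_delta_mx.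
  by rewrite -colE mxE.
exists (\row_i numq (M 0 i)); apply: ratmx_inj; rewrite ratmxM.
have -> : ratmx (\row_i numq (M 0 i)) = M.
  apply/matrixP => i j; rewrite (ord1 i) ratmxE mxE.
  by have /intrP [z ->] := M_int j; rewrite numq_int.
by rewrite /M mulmxKV.
Qed.

End InverseForm.

Section Gluing.
Variables (F : qfamily) (n0 n1 : nat)
  (L0 : 'M[int]_n0) (a0 : 'rV[int]_n0) (L1 : 'M[int]_n1) (a1 : 'rV[int]_n1)
  (theta : 'rV[int]_n0 -> 'rV[int]_n1).
Hypotheses (L0_sym : L0^T = L0) (L1_sym : L1^T = L1)
  (L0_nondeg : nondeg L0) (L1_nondeg : nondeg L1)
  (fam0 : in_family F L0 a0) (fam1 : in_family F L1 a1).
Hypotheses (theta_cok_eq : forall x x', cok_eq L0 x x' -> cok_eq L1 (theta x) (theta x'))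
  (thetaD : forall x y, cok_eq L1 (theta (x + y)) (theta x + theta y))
  (theta_surj : forall y, exists x, cok_eq L1 (theta x) y)
  (theta_qlink : forall x, eqmodZ (qlink F L1 a1 (theta x)) (qlink F L0 a0 x)).

Let L0_unit := nondeg_unitmx L0_nondeg.
Let L1_unit := nondeg_unitmx L1_nondeg.

Local Notation H := (inH L1 theta).
Local Notation lam := (lamH L0 L1).
Local Notation j := (jmap L0 L1).

Lemma inH0 : H (0, 0).
Proof. exact: cok_additive0 thetaD. Qed.

Lemma inHD h k : H h -> H k -> H (padd h k).
Proof. by move=> Hh Hk; apply: cok_eq_trans (thetaD _ _) (cok_eqD Hh Hk). Qed.

Lemma inH_graph x : H (x, theta x).
Proof. exact: cok_eq_refl. Qed.

Lemma inH_jmap v : H (j v).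
Proof.
apply: cok_eq_trans (theta_cok_eq (cok_eq_mulmx L0 v.1)) _.
apply: cok_eq_trans (cok_additive0 thetaD) _.
by exists v.2; rewrite sub0r opprK.
Qed.

(* Since [theta] is additive modulo [L1], it agrees with [x |-> x Theta]
   on classes, so the rows of [[1, Theta]; [0, L1]] form a basis of [H]. *)
Lemma inH_free : free_fg H.
Proof.
pose Theta := \matrix_i theta 'e_i.
have theta_mx x : cok_eq L1 (theta x) (x *m Theta) := cok_additive_mulmx thetaD x.
exists (n0 + n1)%N, (col_mx 1%:M 0), (col_mx Theta L1) => h; split.
  case: h => x0 x1 /= /(cok_eq_trans (cok_eq_sym (theta_mx x0))) [v /= x1E].
  exists (row_mx x0 (- v)); split.
    by rewrite !mul_row_col mulmx1 mulmx0 addr0 mulNmx -x1E opprB addrC subrK.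
  move=> u; rewrite -[u]hsubmxK !mul_row_col mulmx1 mulmx0 addr0 => -[<- x1E'].
  have : (v + rsubmx u) *m L1 = 0.
    by rewrite mulmxDl -x1E x1E' opprD addrA subrr sub0r addNr.
  by move/L1_nondeg/eqP; rewrite addr_eq0 => /eqP ->; rewrite opprK.
case=> u [-> _] /=; rewrite -[u]hsubmxK !mul_row_col mulmx1 mulmx0 addr0.
apply: cok_eq_trans (theta_mx _) _.
by exists (- rsubmx u); rewrite opprD addrA subrr sub0r mulNmx.
Qed.

Lemma qlink_inH h : H h -> qlink F L1 a1 h.2 - qlink F L0 a0 h.1 \is a Num.int.
Proof.
move=> Hh; have /intrP q_theta := theta_qlink h.1.
have := rpredD (qlink_cok_eq L1_sym L1_unit fam1 (cok_eq_sym Hh)) q_theta.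
by rewrite addrA subrK.
Qed.

Lemma lam_int h k : H h -> H k -> lam h k \is a Num.int.
Proof.
move=> Hh Hk; pose d h := qlink F L1 a1 h.2 - qlink F L0 a0 h.1.
have -> : lam h k = - d (padd h k) + d h + d k.
  by rewrite /lamH (linv_polar L0_sym F a0) (linv_polar L1_sym F a1) /d /=; ring.
apply: rpredD; [apply: rpredD; [rewrite rpredN|] |]; apply: qlink_inH => //.
exact: inHD.
Qed.

Lemma lam_symmetric : symmetric_on H lam.
Proof. by move=> h k _ _; rewrite /lamH (linvC L0_sym) (linvC L1_sym). Qed.

Lemma lam_bilinear : bilinear_on H lam.
Proof. by move=> h h' k _ _ _; rewrite /lamH /padd /= !linvDl !linvDr //; split; ring. Qed.

Lemma lam_jmapr h v : lam h (j v) = (app h.1 v.1 + app h.2 v.2)%:~R.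
Proof. by rewrite /lamH linvNr // !linv_mulr // opprK intrD. Qed.

Lemma lam_jmap v w : lam (j v) (j w) = (bil L0 v.1 w.1 - bil L1 v.2 w.2)%:~R.
Proof. by rewrite /lamH linvNr // linvNl opprK !linv_mul2 // intrB. Qed.

Lemma jmapD v w : j (padd v w) = padd (j v) (j w).
Proof. by rewrite /jmap /padd /= !mulmxDl opprD. Qed.

Lemma jmap_inj : injective j.
Proof.
case=> v0 v1 [w0 w1]; rewrite /jmap /= => -[e0 /oppr_inj e1].
congr (_, _); apply/eqP; rewrite -subr_eq0; apply/eqP.
  by apply: L0_nondeg; rewrite mulmxBl e0 subrr.
by apply: L1_nondeg; rewrite mulmxBl e1 subrr.
Qed.

Lemma lam_nondeg h : (forall k, H k -> lam h k = 0) -> h = (0, 0).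
Proof.
move=> lam0; have coord v : app h.1 v.1 + app h.2 v.2 = 0.
  by apply/eqP; rewrite -(intr_eq0 rat) -lam_jmapr (lam0 _ (inH_jmap v)).
case: h coord {lam0} => x0 x1 /= coord; congr (_, _); apply/rowP => i; rewrite mxE.
  by have := coord ('e_i, 0); rewrite app_delta /app mul0mx mxE addr0.
by have := coord (0, 'e_i); rewrite app_delta /app mul0mx mxE add0r.
Qed.

(* [N = (det L0 det L1)^2] works because [det L *: x = (x adj L) L]. *)
Lemma jmap_finite_index :
  exists2 N, N != 0%N & forall k, exists v, j v = (k.1 *+ N, k.2 *+ N).
Proof.
pose d0 := \det L0; pose d1 := \det L1; pose N := `|(d0 * d1) ^+ 2|%N.
have d_neq0 : d0 * d1 != 0 by rewrite mulf_neq0 // -unitmx_ratmx.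
have NE : N%:Z = d0 * d1 * (d0 * d1) by rewrite gez0_abs ?exprn_even_ge0.
exists N; first by rewrite -lt0n absz_gt0 expf_neq0.
move=> k; exists ((d0 * d1 * d1) *: (k.1 *m \adj L0), - ((d1 * d0 * d0) *: (k.2 *m \adj L1))).
rewrite /jmap /= mulNmx opprK -!scalemxAl -!scale_det_mulmx !scalerA.
by rewrite -!scaler_nat natz NE; congr (_ *: _, _ *: _); ring.
Qed.

Lemma inHMn h m : H h -> H (h.1 *+ m, h.2 *+ m).
Proof.
move=> Hh; elim: m => [|m IH]; first by rewrite !mulr0n; apply: inH0.
by rewrite !mulrS; apply: inHD Hh IH.
Qed.

Lemma lam_represent (f : pairT n0 n1 -> int) :
    (forall h k, H h -> H k -> f (padd h k) = f h + f k) ->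
  exists h, forall k, H k -> (f k)%:~R = lam h k.
Proof.
move=> fD; pose g v := f (j v).
have gD v w : g (padd v w) = g v + g w by rewrite /g jmapD fD //; apply: inH_jmap.
pose y0 := \row_i g ('e_i, 0); pose y1 := \row_i g (0, 'e_i).
have g_app v : g v = app y0 v.1 + app y1 v.2.
  rewrite -(additive_app (g := fun x => g (x, 0))) => [|x x'];
    last by rewrite -gD /padd /= addr0.
  rewrite -(additive_app (g := fun x => g (0, x))) => [|x x'];
    last by rewrite -gD /padd /= addr0.
  by rewrite -gD /padd /= addr0 add0r -surjective_pairing.
exists (y0, y1) => k Hk; have [N N_neq0 jN] := jmap_finite_index.
have f0 : f (0, 0) = 0.
  by apply: (addrI (f (0, 0))); rewrite -fD /padd /= ?addr0 //; apply: inH0.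
have fMn m : f (k.1 *+ m, k.2 *+ m) = f k *+ m.
  elim: m => [|m IH]; first by rewrite !mulr0n.
  by rewrite !mulrS -IH -fD //; apply: inHMn.
have [v jv] := jN k; apply: (@mulIf _ N%:R); first by rewrite pnatr_eq0.
rewrite !mulr_natr -rmorphMn -fMn -jv.
transitivity (lam (y0, y1) (j v)); first by rewrite lam_jmapr -g_app.
by rewrite jv /lamH /= !linvMnr // mulrnBl.
Qed.

Lemma inH_of_lam_int h : (forall k, H k -> lam h k \is a Num.int) -> H h.
Proof.
case: h => y0 y1 lam_h_int; pose w := theta y0 - y1.
suff [u wE] : exists u, w = u *m L1 by exists u.
apply: (im_of_linv_int L1_unit) => z; have [x0 x0z] := theta_surj z.
have -> : linv L1 w z = - (linv L1 w (theta x0) - linv L1 w z) +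
    (lam (y0, y1) (x0, theta x0) - lam (y0, theta y0) (x0, theta x0)).
  by rewrite /lamH /= /w !linvDl !linvNl; ring.
apply: rpredD; first by rewrite rpredN; apply: linv_cok_eqr.
by apply: rpredB; [apply: lam_h_int | apply: lam_int]; apply: inH_graph.
Qed.

Lemma lam_nonsingular : nonsingular_on H lam.
Proof.
split=> [h _|f fD]; first exact: lam_nondeg.
have [h lam_f] := lam_represent fD.
exists h; split; last exact: lam_f.
by apply: inH_of_lam_int => k Hk; rewrite -lam_f ?intr_int.
Qed.

Lemma fam_on_glued : fam_on F H lam (a0, a1).
Proof.
have even h : H h -> evenQ (- (2 * (qlink F L1 a1 h.2 - qlink F L0 a0 h.1))).
  by move=> /qlink_inH /intrP [z ->]; exists (- z); rewrite mulrN intrN intrM.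
move: fam0 fam1 even; case: F => [_ _|_ _|[_ ->] [_ ->]] even.
- move=> h /even; congr evenQ; rewrite /lamH /qlink /= (linvC L0_sym a0) (linvC L1_sym a1).
  by field.
- by move=> h /even; congr evenQ; rewrite /lamH /qlink; field.
split=> [h /even|h _]; last by rewrite /lamH !linv0l subrr.
by congr evenQ; rewrite /lamH /qlink; field.
Qed.

End Gluing.

Theorem lemma1p1 (F : qfamily) (n0 n1 : nat)
    (L0 : 'M[int]_n0) (a0 : 'rV[int]_n0) (L1 : 'M[int]_n1) (a1 : 'rV[int]_n1)
    (theta : 'rV[int]_n0 -> 'rV[int]_n1) :
  L0^T = L0 -> L1^T = L1 -> nondeg L0 -> nondeg L1 ->
  in_family F L0 a0 -> in_family F L1 a1 ->
  qlf_isometry F L0 a0 L1 a1 theta ->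
  let H := inH L1 theta in
  let lam := lamH L0 L1 in
  let j := jmap L0 L1 in
  [/\ (* 1 *) [/\ free_fg H, symmetric_on H lam, bilinear_on H lam,
                  integral_on H lam & nonsingular_on H lam],
      (* 2 *) [/\ (forall v, H (j v)),
                  (forall v w, j (padd v w) = padd (j v) (j w)),
                  (forall v w, j v = j w -> v = w) &
                  (forall v w, lam (j v) (j w) = (bil L0 v.1 w.1 - bil L1 v.2 w.2)%:~R)],
      (* 3 *) H (a0, a1),
      (* 4 *) fam_on F H lam (a0, a1) &
      (* 5 *) (forall v, lam (j v) (j v) + lam (a0, a1) (j v) =
                  ((bil L0 v.1 v.1 + app a0 v.1) + (- bil L1 v.2 v.2 + app a1 v.2))%:~R)].
Proof.
move=> L0_sym L1_sym L0_nd L1_nd fam0 fam1 [theta_cok_eq thetaD _ theta_surj [theta_a theta_q]].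
move=> H lam j; rewrite {}/H {}/lam {}/j; split=> //.
- split.
  + exact: inH_free L1_nd thetaD.
  + exact: lam_symmetric.
  + exact: lam_bilinear.
  + by move=> h k Hh Hk; apply/intrP; apply: (lam_int L0_sym L1_sym L1_nd fam1 thetaD theta_q).
  + exact: lam_nonsingular L0_sym L1_sym L0_nd L1_nd fam1 theta_cok_eq thetaD theta_surj theta_q.
- split; [exact: inH_jmap theta_cok_eq thetaD | exact: jmapD | exact: jmap_inj | exact: lam_jmap].
- exact: fam_on_glued L0_sym L1_sym L1_nd fam0 fam1 theta_q.
- move=> v; rewrite lam_jmap // lam_jmapr // -intrD /=.
  by congr (_%:~R); rewrite /app; ring.
Qed.
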